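(* Let $\mathbb{C}=(\mathbf{C},0,\mathbf{D},\mathcal{R})$ be a reactive system with redex RPOs, let $O$ be a set of contextual barbs, and let $L$ be a set of labels (arrows of $\mathbf{C}$). If $L$ is $O$-capturing and every label in $L$ is stable under barbed saturated bisimilarity $\sim^{BS}$, then $\sim^{BS}$ coincides with $L$-bisimilarity $\sim^{L}$.
   Context: A reactive system consists of a category $\mathbf{C}$, a distinguished object $0$, a composition-reflecting subcategory $\mathbf{D}$ of reactive contexts, and a set $\mathcal{R}\subseteq\bigcup_I\mathbf{C}(0,I)\times\mathbf{C}(0,I)$ of reduction rules. Terms are arrows with domain $0$; $C[P]$ denotes $C[-]\circ P$. Reduction: $P\rightsquigarrow Q$ iff $P=d\circ l$, $Q=d\circ r$ for some $\langle l,r\rangle\in\mathcal{R}$, $d\in\mathbf{D}$. For a commuting square $c_1\circ a_1=c_2\circ a_2$ with $a_1:K\to I_2$, $a_2:K\to I_3$, $c_1:I_2\to I_4$, $c_2:I_3\to I_4$, a candidate is $\langle I_5,e,f,g\rangle$ with $e\circ a_1=f\circ a_2$, $g\circ e=c_1$, $g\circ f=c_2$; an RPO is a candidate through which every other candidate $\langle I_6,e',f',g'\rangle$ factors via a unique $h:I_5\to I_6$ ($h\circ e=e'$, $h\circ f=f'$, $g'\circ h=g$); the square is an IPO if $\langle I_4,c_1,c_2,\mathrm{id}\rangle$ is an RPO. A redex square is a commuting square $C[-]\circ P=d\circ l$ with $\langle l,r\rangle\in\mathcal{R}$, $d\in\mathbf{D}$; the system has redex RPOs if every redex square has an RPO.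 IPO transitions: $P\xrightarrow{C[-]}_I d\circ r$ if $d\in\mathbf{D}$, $\langle l,r\rangle\in\mathcal{R}$ and $C[-]\circ P=d\circ l$ is an IPO. $L$-bisimulation: a symmetric relation $\mathcal{R}'$ such that if $P\,\mathcal{R}'\,Q$ and $P\xrightarrow{C[-]}_I P'$ then, if $C[-]\in L$, $Q\xrightarrow{C[-]}_I Q'$ with $P'\,\mathcal{R}'\,Q'$, and otherwise $C[Q]\rightsquigarrow Q'$ with $P'\,\mathcal{R}'\,Q'$; $\sim^L$ is the largest one. Barbs are predicates on terms; $P\downarrow_o$ means $P$ satisfies $o\in O$. Barbed saturated bisimilarity $\sim^{BS}$ is the largest symmetric relation $\mathcal{R}'$ such that if $P\,\mathcal{R}'\,Q$ then for all arrows $C[-]$ composable with $P$: $C[P]\downarrow_o$ implies $C[Q]\downarrow_o$, and $C[P]\rightsquigarrow P'$ implies $C[Q]\rightsquigarrow Q'$ with $P'\,\mathcal{R}'\,Q'$. A barb $o$ is contextual if whenever ($P\downarrow_o$ implies $Q\downarrow_o$) then for all $C[-]$, $C[P]\downarrow_o$ implies $C[Q]\downarrow_o$. $L$ is $O$-capturing if for each $o\in O$ there is $C[-]\in L$ such that for every term $P$, $P\downarrow_o$ iff $P\xrightarrow{C[-]}_I P'$ for some $P'$. A binary predicate $\mathcal{P}(X,Y)$ on terms is stable under a relation $\mathcal{R}'$ if whenever $P\,\mathcal{R}'\,Q$ and $\mathcal{P}(P,P')$ there is $Q'$ with $\mathcal{P}(Q,Q')$ and $P'\,\mathcal{R}'\,Q'$;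 a label $C[-]$ is stable under $\mathcal{R}'$ if the predicate $X\xrightarrow{C[-]}_I Y$ is. *)

Set Implicit Arguments.
Unset Strict Implicit.

Record Category := {
  Ob :> Type;
  Hom : Ob -> Ob -> Type;
  comp : forall A B C : Ob, Hom B C -> Hom A B -> Hom A C;
  idm : forall A : Ob, Hom A A;
  comp_assoc : forall (A B C D : Ob) (h : Hom C D) (g : Hom B C) (f : Hom A B),
      comp h (comp g f) = comp (comp h g) f;
  comp_id_l : forall (A B : Ob) (f : Hom A B), comp (idm B) f = f;
  comp_id_r : forall (A B : Ob) (f : Hom A B), comp f (idm A) = f
}.
Arguments comp {c A B C} _ _.
Arguments idm {c} A.
Arguments Hom {c} _ _.

(** Reactive systems: category, distinguished object 0, a
    composition-reflecting subcategory D of reactive contexts (given by the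
    predicate of its arrows; a subcategory with all objects is determined by
    its arrows, and "subcategory" here is identity- and composition-closed),
    and a set of reduction rules. *)
Record ReactiveSystem := {
  RCat : Category;
  zero : RCat;
  Dctx : forall A B : RCat, @Hom RCat A B -> Prop;
  D_id : forall A : RCat, Dctx (idm A);
  D_comp : forall (A B C : RCat) (g : Hom B C) (f : Hom A B),
      Dctx g -> Dctx f -> Dctx (comp g f);
  D_reflect : forall (A B C : RCat) (g : Hom B C) (f : Hom A B),
      Dctx (comp g f) -> Dctx g /\ Dctx f;
  Rules : forall I : RCat, @Hom RCat zero I -> @Hom RCat zero I -> Prop
}.
Arguments Dctx {r A B} _.
Arguments Rules {r I} _ _.

Section RS.
Variable RS : ReactiveSystem.
Local Notation C := (RCat RS).
Local Notation O0 := (zero RS).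

Definition term (I : C) := @Hom C O0 I.

Definition reduces (J : C) (P Q : term J) : Prop :=
  exists (I : C) (l r : term I) (d : Hom I J),
    Dctx d /\ Rules l r /\ P = comp d l /\ Q = comp d r.

Definition is_candidate (K I2 I3 I4 : C) (a1 : Hom K I2) (a2 : Hom K I3)
  (c1 : Hom I2 I4) (c2 : Hom I3 I4)
  (I5 : C) (e : Hom I2 I5) (f : Hom I3 I5) (g : Hom I5 I4) : Prop :=
  comp e a1 = comp f a2 /\ comp g e = c1 /\ comp g f = c2.

Definition is_RPO (K I2 I3 I4 : C) (a1 : Hom K I2) (a2 : Hom K I3)
  (c1 : Hom I2 I4) (c2 : Hom I3 I4)
  (I5 : C) (e : Hom I2 I5) (f : Hom I3 I5) (g : Hom I5 I4) : Prop :=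
  is_candidate a1 a2 c1 c2 e f g /\
  forall (I6 : C) (e' : Hom I2 I6) (f' : Hom I3 I6) (g' : Hom I6 I4),
    is_candidate a1 a2 c1 c2 e' f' g' ->
    exists h : Hom I5 I6,
      (comp h e = e' /\ comp h f = f' /\ comp g' h = g) /\
      forall h' : Hom I5 I6,
        comp h' e = e' /\ comp h' f = f' /\ comp g' h' = g -> h' = h.

Definition is_IPO (K I2 I3 I4 : C) (a1 : Hom K I2) (a2 : Hom K I3)
  (c1 : Hom I2 I4) (c2 : Hom I3 I4) : Prop :=
  comp c1 a1 = comp c2 a2 /\ is_RPO a1 a2 c1 c2 c1 c2 (idm I4).

Definition has_redex_RPOs : Prop :=
  forall (I J I' : C) (P : term I) (Cx : Hom I J) (l r : term I') (d : Hom I' J),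
    Rules l r -> Dctx d -> comp Cx P = comp d l ->
    exists (I5 : C) (e : Hom I I5) (f : Hom I' I5) (g : Hom I5 J),
      is_RPO P l Cx d e f g.

Definition ipo_trans (I J : C) (P : term I) (Cx : Hom I J) (Q : term J) : Prop :=
  exists (I' : C) (l r : term I') (d : Hom I' J),
    Dctx d /\ Rules l r /\ comp Cx P = comp d l /\ is_IPO P l Cx d /\
    Q = comp d r.

Definition trel := forall I : C, term I -> term I -> Prop.

Definition symmetric_trel (R : trel) : Prop :=
  forall (I : C) (P Q : term I), R I P Q -> R I Q P.

Definition labels := forall A B : C, Hom A B -> Prop.

Definition is_L_bisim (L : labels) (R : trel) : Prop :=
  symmetric_trel R /\
  forall (I J : C) (P Q : term I) (Cx : Hom I J) (P' : term J),
    R I P Q -> ipo_trans P Cx P' ->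
    (L I J Cx -> exists Q' : term J, ipo_trans Q Cx Q' /\ R J P' Q') /\
    (~ L I J Cx -> exists Q' : term J, reduces (comp Cx Q) Q' /\ R J P' Q').

Definition L_bisimilar (L : labels) : trel :=
  fun I P Q => exists R : trel, is_L_bisim L R /\ R I P Q.

Definition barb := forall I : C, term I -> Prop.

Definition is_BS_bisim (O : barb -> Prop) (R : trel) : Prop :=
  symmetric_trel R /\
  forall (I : C) (P Q : term I), R I P Q ->
    forall (J : C) (Cx : Hom I J),
      (forall o : barb, O o -> o J (comp Cx P) -> o J (comp Cx Q)) /\
      (forall P' : term J, reduces (comp Cx P) P' ->
         exists Q' : term J, reduces (comp Cx Q) Q' /\ R J P' Q').

Definition BS_bisimilar (O : barb -> Prop) : trel :=
  fun I P Q => exists R : trel, is_BS_bisim O R /\ R I P Q.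

Definition contextual (o : barb) : Prop :=
  forall (I : C) (P Q : term I),
    (o I P -> o I Q) ->
    forall (J : C) (Cx : Hom I J), o J (comp Cx P) -> o J (comp Cx Q).

Definition O_capturing (O : barb -> Prop) (L : labels) : Prop :=
  forall o : barb, O o ->
    forall I : C, exists (J : C) (Cx : Hom I J),
      L I J Cx /\
      forall P : term I, o I P <-> exists P' : term J, ipo_trans P Cx P'.

Definition stable_label (I J : C) (Cx : Hom I J) (R : trel) : Prop :=
  forall (P Q : term I) (P' : term J),
    R I P Q -> ipo_trans P Cx P' ->
    exists Q' : term J, ipo_trans Q Cx Q' /\ R J P' Q'.

End RS.

(* Bisimilarity over IPO transitions is saturated: a reduction of C[P]
   factors, thanks to the redex RPO, as an IPO transition of P with a label e
   followed by a reactive context g with C = g o e; an L-bisimilar Q answers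
   the transition either by an IPO transition (e in L) or by a reduction of
   e[Q] (e not in L), and both lift through g to a reduction of C[Q].  Hence
   the closure of L-bisimilarity under contexts is a barbed saturated
   bisimulation, barbs being handled by capturing labels and contextuality.
   Conversely, a label in L is answered by stability, and a label outside L
   by saturation, since an IPO transition of P with label C is a reduction
   of C[P]. *)

From Stdlib Require Import Classical.

Section ReactiveSystemBisimilarities.
Local Set Implicit Arguments.
Local Unset Strict Implicit.

Variable RS : ReactiveSystem.
Local Notation C := (RCat RS).

Lemma reduces_Dctx_comp (I J : C) (g : Hom I J) (X Y : term I) :
  Dctx g -> reduces X Y -> reduces (comp g X) (comp g Y).
Proof.
  intros Dg [I' [l [r [d [Dd [Hlr [-> ->]]]]]]].
  exists I', l, r, (comp g d).
  split; [apply D_comp; assumption|].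
  split; [exact Hlr|].
  split; apply comp_assoc.
Qed.

Lemma ipo_trans_reduces (I J : C) (P : term I) (Cx : Hom I J)
  (P' : term J) :
  ipo_trans P Cx P' -> reduces (comp Cx P) P'.
Proof.
  intros [I' [l [r [d [Dd [Hlr [Heq [_ HP']]]]]]]].
  exists I', l, r, d; auto.
Qed.

Lemma RPO_is_IPO (K I2 I3 I4 I5 : C) (a1 : Hom K I2) (a2 : Hom K I3)
  (c1 : Hom I2 I4) (c2 : Hom I3 I4) (e : Hom I2 I5) (f : Hom I3 I5)
  (g : Hom I5 I4) :
  is_RPO a1 a2 c1 c2 e f g -> is_IPO a1 a2 e f.
Proof.
  intros [[Hsq [He Hf]] Hmed].
  split; [exact Hsq|].
  split; [split; [exact Hsq|]; rewrite !comp_id_l; split; reflexivity|].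
  intros I6 e' f' g' [Hsq' [He' Hf']].
  assert (Hcand : is_candidate a1 a2 c1 c2 e' f' (comp g g')).
  { split; [exact Hsq'|].
    rewrite <- !comp_assoc, He', Hf'; split; assumption. }
  destruct (Hmed _ _ _ _ Hcand) as [h [[Hhe [Hhf Hhg]] Huniq]].
  destruct (Hmed _ _ _ _ (conj Hsq (conj He Hf))) as [h0 [_ Huniq0]].
  (* Both g' o h and the identity mediate from the RPO to itself. *)
  assert (Hg'h : comp g' h = h0).
  { apply Huniq0; split; [|split].
    - rewrite <- comp_assoc, Hhe; exact He'.
    - rewrite <- comp_assoc, Hhf; exact Hf'.
    - rewrite comp_assoc; exact Hhg. }
  assert (Hid : idm I5 = h0).
  { apply Huniq0; rewrite !comp_id_l, comp_id_r; auto. }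
  exists h; split.
  - repeat split; congruence.
  - intros h' [Hh'e [Hh'f Hh'g]].
    apply Huniq; repeat split; try assumption.
    rewrite <- comp_assoc, Hh'g, comp_id_r; reflexivity.
Qed.

Lemma reduces_ctx_ipo_decomposition (I J : C) (P : term I) (Cx : Hom I J)
  (P' : term J) :
  has_redex_RPOs RS -> reduces (comp Cx P) P' ->
  exists (I5 : C) (e : Hom I I5) (g : Hom I5 J) (P'' : term I5),
    ipo_trans P e P'' /\ Dctx g /\ Cx = comp g e /\ P' = comp g P''.
Proof.
  intros HRPO [I' [l [r [d [Dd [Hlr [Heq ->]]]]]]].
  destruct (HRPO _ _ _ P Cx l r d Hlr Dd Heq) as [I5 [e [f [g Hrpo]]]].
  pose proof (RPO_is_IPO Hrpo) as Hipo.
  destruct Hrpo as [[Hsq [He Hf]] _].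
  rewrite <- Hf in Dd; apply D_reflect in Dd; destruct Dd as [Dg Df].
  exists I5, e, g, (comp f r).
  split; [exists I', l, r, f; auto|].
  split; [exact Dg|].
  split; [symmetry; exact He|].
  rewrite <- Hf; symmetry; apply comp_assoc.
Qed.

Lemma BS_bisimilar_sym (O : barb RS -> Prop) :
  symmetric_trel (BS_bisimilar O).
Proof.
  intros I P Q [R [HR HPQ]]; exists R; split; [exact HR|].
  apply (proj1 HR); exact HPQ.
Qed.

Lemma L_bisimilar_sym (L : labels RS) : symmetric_trel (L_bisimilar L).
Proof.
  intros I P Q [R [HR HPQ]]; exists R; split; [exact HR|].
  apply (proj1 HR); exact HPQ.
Qed.

Lemma BS_bisimilar_reduces (O : barb RS -> Prop) (I J : C)
  (P Q : term I) (Cx : Hom I J) (P' : term J) :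
  BS_bisimilar O P Q -> reduces (comp Cx P) P' ->
  exists Q', reduces (comp Cx Q) Q' /\ BS_bisimilar O P' Q'.
Proof.
  intros [R [HR HPQ]] Hred.
  destruct (proj2 (proj2 HR _ _ _ HPQ _ Cx) P' Hred) as [Q' [HQ' HPQ']].
  exists Q'; split; [exact HQ'|]; exists R; auto.
Qed.

Lemma L_bisimilar_ipo_trans (L : labels RS) (I J : C) (P Q : term I)
  (Cx : Hom I J) (P' : term J) :
  L_bisimilar L P Q -> ipo_trans P Cx P' ->
  (L I J Cx -> exists Q', ipo_trans Q Cx Q' /\ L_bisimilar L P' Q') /\
  (~ L I J Cx -> exists Q', reduces (comp Cx Q) Q' /\ L_bisimilar L P' Q').
Proof.
  intros [R [HR HPQ]] Htr.
  destruct (proj2 HR _ _ _ _ _ _ HPQ Htr) as [HinL HnotL].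
  split.
  - intros HL; destruct (HinL HL) as [Q' [HQ' HPQ']].
    exists Q'; split; [exact HQ'|]; exists R; auto.
  - intros HL; destruct (HnotL HL) as [Q' [HQ' HPQ']].
    exists Q'; split; [exact HQ'|]; exists R; auto.
Qed.

Lemma L_bisimilar_ipo_trans_reduces (L : labels RS) (I J : C)
  (P Q : term I) (Cx : Hom I J) (P' : term J) :
  L_bisimilar L P Q -> ipo_trans P Cx P' ->
  exists Q', reduces (comp Cx Q) Q' /\ L_bisimilar L P' Q'.
Proof.
  intros HPQ Htr.
  destruct (L_bisimilar_ipo_trans HPQ Htr) as [HinL HnotL].
  destruct (classic (L I J Cx)) as [HL|HL].
  - destruct (HinL HL) as [Q' [HQ' HPQ']].
    exists Q'; split; [apply ipo_trans_reduces|]; assumption.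
  - exact (HnotL HL).
Qed.

Lemma L_bisimilar_barb (O : barb RS -> Prop) (L : labels RS) (o : barb RS)
  (I : C) (P Q : term I) :
  O_capturing O L -> O o -> L_bisimilar L P Q -> o I P -> o I Q.
Proof.
  intros Hcap Ho HPQ HoP.
  destruct (Hcap o Ho I) as [J [Cx [HL Hcapt]]].
  apply Hcapt in HoP; destruct HoP as [P' HP'].
  destruct (proj1 (L_bisimilar_ipo_trans HPQ HP') HL) as [Q' [HQ' _]].
  apply Hcapt; exists Q'; exact HQ'.
Qed.

Definition ctx_closure (R : trel RS) [J : C] (X Y : term J) : Prop :=
  exists (I : C) (P Q : term I) (Cx : Hom I J),
    R I P Q /\ X = comp Cx P /\ Y = comp Cx Q.

Lemma ctx_closure_incl (R : trel RS) (I : C) (P Q : term I) :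
  R I P Q -> ctx_closure R P Q.
Proof.
  intros HPQ; exists I, P, Q, (idm I); rewrite !comp_id_l; auto.
Qed.

Lemma ctx_closure_L_bisimilar_is_BS_bisim (O : barb RS -> Prop)
  (L : labels RS) :
  has_redex_RPOs RS -> (forall o, O o -> contextual o) -> O_capturing O L ->
  is_BS_bisim O (ctx_closure (L_bisimilar L)).
Proof.
  intros HRPO Hctx Hcap; split.
  - intros J X Y [I [P [Q [C0 [HPQ [-> ->]]]]]].
    exists I, Q, P, C0; split; [apply L_bisimilar_sym; exact HPQ|auto].
  - intros J X Y [I [P [Q [C0 [HPQ [-> ->]]]]]] K Cx.
    rewrite !comp_assoc; split.
    + intros o Ho.
      apply (Hctx o Ho); exact (L_bisimilar_barb Hcap Ho HPQ).
    + intros P' Hred.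
      destruct (reduces_ctx_ipo_decomposition HRPO Hred)
        as [I5 [e [g [P'' [Htr [Dg [-> ->]]]]]]].
      destruct (L_bisimilar_ipo_trans_reduces HPQ Htr) as [Q'' [HQ'' HPQ'']].
      exists (comp g Q''); split.
      * rewrite <- comp_assoc; apply reduces_Dctx_comp; assumption.
      * exists I5, P'', Q'', g; auto.
Qed.

Lemma BS_bisimilar_is_L_bisim (O : barb RS -> Prop) (L : labels RS) :
  (forall (I J : C) (Cx : Hom I J), L I J Cx ->
     stable_label Cx (BS_bisimilar O)) ->
  is_L_bisim L (BS_bisimilar O).
Proof.
  intros Hstab; split; [apply BS_bisimilar_sym|].
  intros I J P Q Cx P' HPQ Htr; split.
  - intros HL; exact (Hstab _ _ _ HL _ _ _ HPQ Htr).
  - intros _; exact (BS_bisimilar_reduces HPQ (ipo_trans_reduces Htr)).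
Qed.

End ReactiveSystemBisimilarities.

Theorem mainTheorem2 (RS : ReactiveSystem) (O : barb RS -> Prop)
  (L : labels RS) :
  has_redex_RPOs RS ->
  (forall o : barb RS, O o -> contextual o) ->
  O_capturing O L ->
  (forall (I J : RCat RS) (Cx : Hom I J), L I J Cx ->
     stable_label Cx (BS_bisimilar O)) ->
  forall (I : RCat RS) (P Q : term I),
    BS_bisimilar O P Q <-> L_bisimilar L P Q.
Proof.
  intros HRPO Hctx Hcap Hstab I P Q; split.
  - intros HPQ; exists (BS_bisimilar O).
    split; [apply BS_bisimilar_is_L_bisim; exact Hstab | exact HPQ].
  - intros HPQ; exists (ctx_closure (L_bisimilar L)); split.
    + apply ctx_closure_L_bisimilar_is_BS_bisim; assumption.
    + apply ctx_closure_incl; exact HPQ.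
Qed.
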